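(* Let $N>K$ and let $\mathbf{d}_u=(d_1,\dots,d_K)$ be a demand vector with pairwise distinct entries. Let the cache configuration $\mathcal{C}$ be produced by the new placement scheme with $F=\lceil N/M\rceil F'$ packets per file, and let $t=K/\lceil N/M\rceil$. If $$F\le \frac{\lceil N/M\rceil}{2K}\left(1-\frac{1}{\lceil N/M\rceil}\right)\exp\!\left(2t\Big(1-\frac{t}{K}\Big)\Big(1-\frac1K\Big)\right),$$ then $$\mathbb{E}\big[R^{nd}(\mathcal{C},\mathbf{d}_u)\big]\ge \frac12\Big(1-\frac{M}{N}\Big)K,$$ where the expectation is over the random placement.
   Context: Setting: a server holds a library of $N$ files, each split into $F$ packets (packet $f$ of file $n$ denoted $(n,f)$); $K$ users each have a cache holding $M$ files' worth of packets ($M\le N$). For a cache configuration, $S_{n,f}\subseteq[1:K]$ denotes the set of users whose cache stores packet $(n,f)$. User $k$ requests file $d_k$. New placement scheme: $F=\lceil N/M\rceil F'$ with $F'$ a positive integer; the packets of every file are partitioned into $F'$ groups of $\lceil N/M\rceil$ packets each. For every user $k$, file $n$ and group of file $n$, exactly one packet of that group is chosen uniformly at random and stored in user $k$'s cache; all choices are mutually independent. Delivery scheme and its rate $R^{nd}$: for $k\in[1:K]$ and $T\subseteq[1:K]\setminus\{k\}$, let $V_{k,T}$ be the set of packets $f$ of file $d_k$ with $S_{d_k,f}=T$ exactly. For every nonempty $\mathcal{S}\subseteq[1:K]$ the scheme transmits the XOR of the packet vectors $V_{k,\mathcal{S}\setminus\{k\}}$, $k\in\mathcal{S}$ (shorter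 vectors zero-padded to the longest). Its normalized number of transmissions is $$R^{nd}(\mathcal{C},\mathbf{d})=\sum_{\emptyset\ne\mathcal{S}\subseteq[1:K]}\frac{\max_{k\in\mathcal{S}}|V_{k,\mathcal{S}\setminus\{k\}}|}{F}.$$ *)

From mathcomp Require Import all_boot all_order all_algebra.
From mathcomp Require Import all_classical all_reals all_analysis.
Set Implicit Arguments. Unset Strict Implicit. Unset Printing Implicit Defensive.
Import Order.TTheory GRing.Theory Num.Theory.
Local Open Scope ring_scope.

(* Cache configuration produced by the new placement scheme, with q := ceil(N/M)
   packets per group and F' groups per file.  Packet (g, j) : 'I_F' * 'I_q is the
   j-th packet of group g (so a file has F = q * F' packets).  A configuration is
   the choice c (k, n, g) : 'I_q of the packet of group g of file n cached by user k. *)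
Definition placement (K N F' q : nat) := {ffun 'I_K * 'I_N * 'I_F' -> 'I_q}.

Definition Sset K N F' q (c : placement K N F' q) (n : 'I_N) (f : 'I_F' * 'I_q)
  : {set 'I_K} := [set k | c (k, n, f.1) == f.2].

Definition Vcard K N F' q (c : placement K N F' q) (d : 'I_K -> 'I_N)
  (k : 'I_K) (T : {set 'I_K}) : nat :=
  #|[set f : 'I_F' * 'I_q | Sset c (d k) f == T]|.

Definition Rnd {R : realType} K N F' q (c : placement K N F' q) (d : 'I_K -> 'I_N) : R :=
  \sum_(S : {set 'I_K} | S != finset.set0)
     ((\max_(k in S) Vcard c d k (S :\ k))%N)%:R / (q * F')%:R.

(* Expectation over the uniform (independent, uniform per group) random placement *)
Definition ERnd {R : realType} K N F' q (d : 'I_K -> 'I_N) : R :=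
  (\sum_(c : placement K N F' q) Rnd c d) / #|{: placement K N F' q}|%:R.

Definition qceil {R : realType} (N : nat) (M : R) : nat := `|Num.ceil (N%:R / M)|%N.

From mathcomp Require Import all_boot all_order all_algebra.
From mathcomp Require Import all_classical all_reals all_analysis.
From mathcomp Require Import ring lra zify.
Set Implicit Arguments. Unset Strict Implicit. Unset Printing Implicit Defensive.
Import Order.TTheory GRing.Theory Num.Theory.

(* With V_k := V_(k, S\k), the transmission for S has length
   max_(k in S) V_k >= sum_(k in S) V_k - sum_(k <> k' in S) V_k V_k'.  Summed over S,
   the linear terms count, for every user, the requested packets missing from its own
   cache; their expectation is K F (1 - p) with p = 1/q.  The quadratic terms count the
   pairs (f of file d_k, f' of file d_k') with S_f + {k} = S_f' + {k'}.  Caches of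
   distinct users are independent and d is injective, so this event factorises over the
   users: its probability is p(1-p) at k and at k', and p^2 + (1-p)^2 = 1 - 2p(1-p)
   <= exp(-2p(1-p)) at each of the other K - 2 users.  The hypothesis on F then makes
   the expected quadratic term at most half of the linear one, and p <= M/N. *)

Lemma card_set_sum (T : finType) (b : pred T) : #|[set x | b x]| = \sum_x b x.
Proof. by rewrite -sum1_card big_mkcond; apply: eq_bigr => x _; rewrite inE; case: (b x). Qed.

Lemma leq_sum_bigmax (I : finType) (S : {set I}) (V : I -> nat) :
  \sum_(k in S) V k <= \max_(k in S) V k + \sum_(k in S) \sum_(k' in S | k' != k) V k * V k'.
Proof.
have [S0|S_gt0] := posnP #|S|.
  by rewrite big_pred0 // => k; apply/negbTE/negP => kS; move: S0; rewrite (cardD1 k) kS.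
have [k0 k0S max_k0] := eq_bigmax_cond V S_gt0; rewrite max_k0.
rewrite (bigD1 k0) //= leq_add2l [X in _ <= X](bigD1 k0) //= (leq_trans _ (leq_addl _ _)) //.
apply: leq_sum => k /andP[kS kk0].
have Vk : V k <= V k0 by rewrite -max_k0 leq_bigmax_cond.
rewrite (bigD1 k0) /=; last by rewrite k0S eq_sym.
apply: leq_trans (leq_addr _ _); nia.
Qed.

Section SetSwaps.
Variable I : finType.

Lemma sum_setD1_eq (k : I) (T : {set I}) (Q : pred {set I}) :
  \sum_(S : {set I}) [&& k \in S, T == S :\ k & Q S] = (k \notin T) && Q (k |: T).
Proof.
rewrite (bigD1 (k |: T)) //= big1 ?addn0 => [|S SkT].
  rewrite setU11 /=; case: (boolP (k \in T)) => [kT|kT] /=; last by rewrite setU1K ?eqxx.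
  suff -> : (T == (k |: T) :\ k) = false by [].
  by apply/negbTE/negP => /eqP/setP/(_ k); rewrite !inE eqxx kT.
apply/eqP; rewrite eqb0; apply/and3P => -[kS /eqP TE _]; move: SkT.
by rewrite TE finset.setD1K ?eqxx.
Qed.

Definition fiber_card (P : finType) (sig : I -> P -> {set I}) (k : I) (T : {set I}) : nat :=
  #|[set f | sig k f == T]|.

Variables (P : finType) (sig : I -> P -> {set I}).

Lemma sum_fiber_card :
  \sum_(S : {set I}) \sum_(k in S) fiber_card sig k (S :\ k)
  = \sum_k #|[set f | k \notin sig k f]|.
Proof.
rewrite (exchange_big_dep xpredT) //=; apply: eq_bigr => k _.
rewrite card_set_sum; under eq_bigr do rewrite /fiber_card card_set_sum.
rewrite exchange_big; apply: eq_bigr => f _.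
rewrite -(andbT (k \notin _)) -(sum_setD1_eq k _ xpredT) big_mkcond; apply: eq_bigr => S _.
by case: (k \in S); rewrite ?andbT.
Qed.

Lemma sum_fiber_card_pairs :
  \sum_(S : {set I}) \sum_(k in S) \sum_(k' in S | k' != k)
     fiber_card sig k (S :\ k) * fiber_card sig k' (S :\ k')
  = \sum_k \sum_(k' | k' != k) #|[set ff : P * P |
       [&& k \notin sig k ff.1, k' \in sig k ff.1 & sig k' ff.2 == (k |: sig k ff.1) :\ k']]|.
Proof.
rewrite (exchange_big_dep xpredT) //=; apply: eq_bigr => k _.
rewrite (exchange_big_dep (fun k' => k' != k)) /=; last by move=> S k' _ /andP[].
apply: eq_bigr => k' k'k; rewrite card_set_sum.
rewrite -(pair_bigA _ (fun f f' =>
  nat_of_bool [&& k \notin sig k f, k' \in sig k f & sig k' f' == (k |: sig k f) :\ k'])) /=.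
under eq_bigr do rewrite /fiber_card !card_set_sum big_distrl /=.
rewrite exchange_big; apply: eq_bigr => f _.
under eq_bigr do rewrite big_distrr /=.
rewrite exchange_big; apply: eq_bigr => f' _.
have k'A : (k' \in k |: sig k f) = (k' \in sig k f) by rewrite in_setU1 (negbTE k'k).
rewrite -k'A -(sum_setD1_eq k _ (fun S => (k' \in S) && (sig k' f' == S :\ k'))) big_mkcond.
apply: eq_bigr => S _; rewrite k'k andbT mulnb.
by case: (k \in S); case: (k' \in S); rewrite ?andbF.
Qed.

Definition swap_pattern (k k' j : I) (a b : bool) : bool :=
  if j == k then ~~ a && b else if j == k' then a && ~~ b else a == b.

Lemma swap_patternP (A B : {set I}) (k k' : I) : k' != k ->
  [&& k \notin A, k' \in A & B == (k |: A) :\ k']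
  = [forall j, swap_pattern k k' j (j \in A) (j \in B)].
Proof.
move=> k'k; apply/and3P/forallP => [[kA k'A /eqP->] j|pattern].
  rewrite /swap_pattern !inE; case: eqP => [->|/eqP jk]; first by rewrite eq_sym k'k kA.
  by case: eqP => [->|_]; rewrite ?k'A ?(negbTE jk) ?eqxx.
have := pattern k; have := pattern k'; rewrite /swap_pattern eqxx (negbTE k'k) eqxx.
move=> /andP[k'A k'B] /andP[kA kB]; split=> //; apply/eqP/setP => j; rewrite !inE.
have := pattern j; rewrite /swap_pattern.
case: eqP => [->|/eqP jk]; first by rewrite kB eq_sym k'k.
by case: eqP => [->|_] /=; [rewrite (negbTE k'B) | move=> /eqP].
Qed.

End SetSwaps.

Local Open Scope ring_scope.

Section FfunSums.
Variable R : comPzRingType.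

Lemma sum_ffun_pinned (Z J : finType) (P : pred Z) (g : Z -> J) :
  #|J|%:R ^+ #|P| * \sum_(h : {ffun Z -> J}) \prod_(z | P z) (h z == g z)%:R
  = #|{ffun Z -> J}|%:R :> R.
Proof.
pose phi z (j : J) : R := if P z then (j == g z)%:R else 1.
have sum_phi z : \sum_j phi z j = if P z then 1 else #|J|%:R.
  rewrite /phi; case: (P z); last by rewrite sumr_const.
  by rewrite (bigD1 (g z)) //= eqxx big1 ?addr0 // => j /negbTE ->.
under eq_bigr do rewrite big_mkcond /=.
rewrite -(bigA_distr_bigA phi) /=.
under eq_bigr do rewrite sum_phi.
rewrite (bigID P) /= big1 ?mul1r => [|z -> //].
rewrite (eq_bigr (fun _ => #|J|%:R)) => [|z /negbTE -> //].
rewrite prodr_const -exprD card_ffun natrX; congr (_ ^+ _); exact: cardC.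
Qed.

Lemma sum_ffun_coord (Z J : finType) (x : Z) (psi : J -> R) :
  #|J|%:R * \sum_(h : {ffun Z -> J}) psi (h x)
  = #|{ffun Z -> J}|%:R * \sum_j psi j.
Proof.
have pin j := sum_ffun_pinned (pred1 x) (fun _ => j).
rewrite card1 in pin.
have delta (h : {ffun Z -> J}) : psi (h x) = \sum_j psi j * \prod_(z | z == x) (h z == j)%:R.
  rewrite (bigD1 (h x)) //= big_pred1_eq eqxx mulr1 big1 ?addr0 // => j hj.
  by rewrite big_pred1_eq eq_sym (negbTE hj) mulr0.
under eq_bigr do rewrite delta.
rewrite exchange_big !mulr_sumr; apply: eq_bigr => j _.
by rewrite -mulr_sumr mulrCA pin mulrC.
Qed.

Lemma sum_ffun_coord2 (Z J : finType) (x y : Z) (psi : J -> J -> R) : x != y ->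
  #|J|%:R ^+ 2 * \sum_(h : {ffun Z -> J}) psi (h x) (h y)
  = #|{ffun Z -> J}|%:R * \sum_i \sum_j psi i j.
Proof.
move=> xy; have yx : y != x by rewrite eq_sym.
have pin (i j : J) := sum_ffun_pinned (pred2 x y) (fun z => if z == x then i else j).
rewrite card2 xy in pin.
have pair2 (h : {ffun Z -> J}) i j :
    \prod_(z | pred2 x y z) (h z == (if z == x then i else j))%:R
    = (h x == i)%:R * (h y == j)%:R :> R.
  rewrite (bigD1 x) /= ?eqxx //; congr (_ * _).
  rewrite (big_pred1 y) /= ?(negbTE yx) // => z /=.
  by rewrite andb_orl andbN /= andb_idr // => /eqP->.
have delta (h : {ffun Z -> J}) : psi (h x) (h y)
    = \sum_i \sum_j psi i j * \prod_(z | pred2 x y z) (h z == (if z == x then i else j))%:R.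
  rewrite (bigD1 (h x)) //= (bigD1 (h y)) //= pair2 !eqxx mulr1n !mulr1.
  rewrite !big1 ?addr0 // => [i hi|j hj]; last by rewrite pair2 eq_sym (negbTE hj) !mulr0.
  by apply: big1 => j _; rewrite pair2 eq_sym (negbTE hi) mul0r mulr0.
under eq_bigr do rewrite delta.
rewrite exchange_big !mulr_sumr; apply: eq_bigr => i _.
rewrite exchange_big !mulr_sumr; apply: eq_bigr => j _.
by rewrite -mulr_sumr mulrCA pin mulrC.
Qed.

Lemma sum_ffun_curry (A B C J : finType) (G : A -> {ffun B * C -> J} -> R) :
  \sum_(c : {ffun A * B * C -> J}) \prod_a G a [ffun y => c (a, y.1, y.2)]
  = \prod_a \sum_h G a h.
Proof.
rewrite bigA_distr_bigA /=.
pose curry (c : {ffun A * B * C -> J}) := [ffun a => [ffun y => c (a, y.1, y.2)]].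
pose uncurry (H : {ffun A -> {ffun B * C -> J}}) : {ffun A * B * C -> J} :=
  [ffun x => H x.1.1 (x.1.2, x.2)].
have curryK : cancel curry uncurry by move=> c; apply/ffunP => -[[a b] e]; rewrite !ffunE.
have uncurryK : cancel uncurry curry.
  by move=> H; apply/ffunP => a; apply/ffunP => -[b e]; rewrite !ffunE.
rewrite (reindex uncurry) /=; last by exists curry.
by apply: eq_bigr => H _; rewrite -{2}(uncurryK H); apply: eq_bigr => a _; rewrite ffunE.
Qed.

Lemma sum_eqb (J : finType) (a : J) (g : bool -> R) :
  \sum_u g (u == a) = g true + (#|J|%:R - 1) * g false.
Proof.
rewrite (bigD1 a) //= eqxx; congr (_ + _).
rewrite (eq_bigr (fun _ => g false)) => [|u /negbTE -> //].
have J0 : (0 < #|J|)%N by apply/card_gt0P; exists a.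
by rewrite sumr_const cardC1 -[in LHS]mulr_natl -[#|J| in RHS](prednK J0) -natr1 addrK.
Qed.

Lemma natr_forall (T : finType) (b : pred T) :
  [forall x, b x]%:R = \prod_x (b x)%:R :> R.
Proof.
have [/forallP all_b|/forallPn[x not_bx]] := boolP [forall x, b x].
  by rewrite big1 // => x _; rewrite all_b.
by rewrite (bigD1 x) //= (negbTE not_bx) mul0r.
Qed.

Lemma prod_if_pred2 (I : finType) (k k' : I) (e b : R) : k' != k ->
  \prod_j (if (j == k) || (j == k') then e else b) = e ^+ 2 * b ^+ #|I|.-2.
Proof.
move=> k'k; rewrite (bigID (pred2 k k')) /=.
rewrite [X in X * _](eq_bigr (fun _ => e)) => [|j -> //].
rewrite [X in _ * X](eq_bigr (fun _ => b)) => [|j /negbTE -> //].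
rewrite !prodr_const card2 eq_sym k'k; congr (_ * _ ^+ _).
by rewrite -(cardC (pred2 k k')) card2 eq_sym k'k.
Qed.

End FfunSums.

Lemma sum_swap_pattern (R : comPzRingType) (I J : finType) (k k' j : I) (a a' : J) :
  \sum_u \sum_v (swap_pattern k k' j (u == a) (v == a'))%:R
  = (if (j == k) || (j == k') then #|J|%:R - 1 else 1 + (#|J|%:R - 1) ^+ 2) :> R.
Proof.
under eq_bigr do rewrite (sum_eqb a' (fun b => (swap_pattern k k' j (_ == a) b)%:R)).
rewrite (sum_eqb a (fun b => (swap_pattern k k' j b true)%:R
                          + (#|J|%:R - 1) * (swap_pattern k k' j b false)%:R)) /swap_pattern.
by case: (j == k); case: (j == k') => /=; ring.
Qed.

Section Placement.
Variables (R : realType) (K N F' q : nat) (d : 'I_K -> 'I_N).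

Definition uncached (c : placement K N F' q) : nat :=
  \sum_k #|[set f : 'I_F' * 'I_q | k \notin Sset c (d k) f]|.

(* Pairs of packets (f, f') XORed together in the transmission for S = S_f + {k}. *)
Definition swapped_pairs (c : placement K N F' q) : nat :=
  \sum_k \sum_(k' | k' != k) #|[set ff : ('I_F' * 'I_q) * ('I_F' * 'I_q) |
    [&& k \notin Sset c (d k) ff.1, k' \in Sset c (d k) ff.1
      & Sset c (d k') ff.2 == (k |: Sset c (d k) ff.1) :\ k']]|.

Lemma uncached_le_max (c : placement K N F' q) :
  (uncached c <= \sum_(S : {set 'I_K} | S != finset.set0) \max_(k in S) Vcard c d k (S :\ k)
                 + swapped_pairs c)%N.
Proof.
rewrite /uncached /swapped_pairs -(sum_fiber_card (fun k => Sset c (d k))).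
rewrite -(sum_fiber_card_pairs (fun k => Sset c (d k))).
rewrite (bigD1 finset.set0) //= big_set0 add0n.
rewrite [X in (_ <= _ + X)%N](bigD1 finset.set0) //= big_set0 add0n.
by rewrite -big_split leq_sum // => S _; exact: leq_sum_bigmax.
Qed.

Lemma uncached_le_Rnd (c : placement K N F' q) : (0 < q * F')%N ->
  ((uncached c)%:R - (swapped_pairs c)%:R) / (q * F')%:R <= Rnd c d :> R.
Proof.
move=> qF'_gt0; rewrite /Rnd -mulr_suml ler_pM2r ?invr_gt0 ?ltr0n //.
by rewrite lerBlDr -natr_sum -natrD ler_nat uncached_le_max.
Qed.

Lemma sum_uncached : (0 < q)%N ->
  \sum_(c : placement K N F' q) (uncached c)%:R
  = #|{: placement K N F' q}|%:R * (K%:R * (q * F')%:R * (1 - q%:R^-1)) :> R.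
Proof.
move=> q_gt0; have q0 : q%:R != 0 :> R by rewrite pnatr_eq0 -lt0n.
have per_packet k (f : 'I_F' * 'I_q) :
    \sum_(c : placement K N F' q) (k \notin Sset c (d k) f)%:R
    = #|{: placement K N F' q}|%:R * (1 - q%:R^-1) :> R.
  apply: (mulfI q0); under eq_bigr do rewrite inE.
  have := sum_ffun_coord (k, d k, f.1) (fun i : 'I_q => (i != f.2)%:R : R).
  rewrite card_ord => ->; rewrite (sum_eqb f.2 (fun b => (~~ b)%:R)) card_ord /=.
  by field.
under eq_bigr do rewrite /uncached natr_sum; rewrite exchange_big /=.
under eq_bigr do under eq_bigr do rewrite card_set_sum natr_sum.
under eq_bigr do rewrite exchange_big /=.
under eq_bigr do under eq_bigr do rewrite per_packet.
rewrite !sumr_const card_prod !card_ord -mulrnA -mulr_natr !natrM.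
by move: #|_|%:R => P; ring.
Qed.

Lemma sum_swap_event (k k' : 'I_K) (f f' : 'I_F' * 'I_q) :
  injective d -> (0 < q)%N -> k' != k ->
  \sum_(c : placement K N F' q)
     [&& k \notin Sset c (d k) f, k' \in Sset c (d k) f
       & Sset c (d k') f' == (k |: Sset c (d k) f) :\ k']%:R
  = #|{: placement K N F' q}|%:R
    * ((q%:R^-1 * (1 - q%:R^-1)) ^+ 2 * (1 - 2 * q%:R^-1 * (1 - q%:R^-1)) ^+ K.-2) :> R.
Proof.
move=> d_inj q_gt0 k'k; have q0 : q%:R != 0 :> R by rewrite pnatr_eq0 -lt0n.
pose G j (h : {ffun 'I_N * 'I_F' -> 'I_q}) : R :=
  (swap_pattern k k' j (h (d k, f.1) == f.2) (h (d k', f'.1) == f'.2))%:R.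
have factorise (c : placement K N F' q) :
    [&& k \notin Sset c (d k) f, k' \in Sset c (d k) f
      & Sset c (d k') f' == (k |: Sset c (d k) f) :\ k']%:R
    = \prod_j G j [ffun y => c (j, y.1, y.2)].
  rewrite swap_patternP // natr_forall.
  by apply: eq_bigr => j _; rewrite /G !ffunE !inE.
have xy : (d k, f.1) != (d k', f'.1) by apply: contra_neq k'k => -[/d_inj ->].
have per_user j : \sum_h G j h = #|{ffun 'I_N * 'I_F' -> 'I_q}|%:R
    * (if (j == k) || (j == k') then q%:R^-1 * (1 - q%:R^-1)
       else 1 - 2 * q%:R^-1 * (1 - q%:R^-1)).
  apply: (mulfI (expf_neq0 2 q0)).
  have := sum_ffun_coord2
    (fun u v : 'I_q => (swap_pattern k k' j (u == f.2) (v == f'.2))%:R : R) xy.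
  rewrite sum_swap_pattern card_ord => ->.
  by case: ifP => _; field.
rewrite (eq_bigr _ (fun c _ => factorise c)) sum_ffun_curry.
rewrite (eq_bigr _ (fun j _ => per_user j)).
rewrite big_split /= prodr_const card_ord (prod_if_pred2 _ _ k'k) card_ord.
by rewrite -natrX !card_ffun !card_prod !card_ord -expnM mulnC mulnA.
Qed.

Lemma sum_swapped_pairs : injective d -> (0 < q)%N ->
  \sum_(c : placement K N F' q) (swapped_pairs c)%:R
  = #|{: placement K N F' q}|%:R * ((K * K.-1)%:R * (q * F')%:R ^+ 2
    * ((q%:R^-1 * (1 - q%:R^-1)) ^+ 2 * (1 - 2 * q%:R^-1 * (1 - q%:R^-1)) ^+ K.-2)) :> R.
Proof.
move=> d_inj q_gt0.
under eq_bigr do rewrite /swapped_pairs natr_sum; rewrite exchange_big /=.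
under eq_bigr do under eq_bigr do rewrite natr_sum.
under eq_bigr do rewrite exchange_big /=.
under eq_bigr do under eq_bigr do under eq_bigr do rewrite card_set_sum natr_sum.
under eq_bigr => k _ do under eq_bigr => k' k'k do
  rewrite exchange_big (eq_bigr _ (fun ff _ => sum_swap_event ff.1 ff.2 d_inj q_gt0 k'k)) /=.
under eq_bigr do under eq_bigr do rewrite sumr_const.
under eq_bigr do rewrite !card_prod !card_ord.
under eq_bigr => k _ do rewrite (eq_bigl (fun k' => k' \in predC1 k)) // sumr_const cardC1 card_ord.
rewrite sumr_const card_ord -!mulrnA -[LHS]mulr_natr.
rewrite (_ : (F' * q * (F' * q) * (K.-1 * K) = K * K.-1 * (q * F') ^ 2)%N); last first.
  by rewrite expnS expn1; lia.
by rewrite natrM natrX; move: #|_|%:R => P; ring.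
Qed.

Lemma ERnd_ge : injective d -> (0 < q)%N -> (0 < F')%N ->
  K%:R * (1 - q%:R^-1) - (K * K.-1)%:R * (q * F')%:R
    * ((q%:R^-1 * (1 - q%:R^-1)) ^+ 2 * (1 - 2 * q%:R^-1 * (1 - q%:R^-1)) ^+ K.-2)
  <= @ERnd R K N F' q d.
Proof.
move=> d_inj q_gt0 F'_gt0; have qF'_gt0 : (0 < q * F')%N by rewrite muln_gt0 q_gt0.
have Pc_gt0 : 0 < #|{: placement K N F' q}|%:R :> R.
  by rewrite ltr0n card_ffun expn_gt0 card_ord q_gt0.
rewrite /ERnd ler_pdivlMr //.
apply: le_trans (ler_sum _ (fun c _ => uncached_le_Rnd c qF'_gt0)).
rewrite -mulr_suml sumrB sum_uncached // sum_swapped_pairs //.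
rewrite le_eqVlt; apply/orP; left; apply/eqP; move: #|_|%:R => P; field.
by rewrite !pnatr_eq0 -!lt0n F'_gt0 q_gt0.
Qed.

End Placement.

Section Estimates.
Variable R : realType.

Lemma expR_le2 (x : R) : x <= 1 / 2 -> expR x <= 2.
Proof.
move=> x_le; have := expR_ge1Dx (- x); rewrite -(ler_pM2l (expR_gt0 x)) expRxMexpNx_1.
have := expR_gt0 x; nra.
Qed.

Lemma swap_term_le (K : nat) (q F : R) : 1 <= q -> 0 <= F ->
  F <= q / (2 * K%:R) * (1 - 1 / q)
         * expR (2 * (K%:R / q) * (1 - K%:R / q / K%:R) * (1 - 1 / K%:R)) ->
  (K * K.-1)%:R * F
    * ((q^-1 * (1 - q^-1)) ^+ 2 * (1 - 2 * q^-1 * (1 - q^-1)) ^+ K.-2)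
  <= K%:R * (1 - q^-1) / 2.
Proof.
move=> q_ge1 F_ge0 hF; have [->|K_gt0] := posnP K; first by rewrite !mul0r.
have q_gt0 : 0 < q by lra.
have K_pos : 0 < K%:R :> R by rewrite ltr0n.
rewrite div1r in hF; set p := q^-1 in hF *.
have pq : p * q = 1 by rewrite mulVf ?gt_eqF.
have p_gt0 : 0 < p by rewrite invr_gt0.
have p_le1 : p <= 1 by nra.
set x := 2 * p * (1 - p).
have x_ge0 : 0 <= x by rewrite /x; nra.
have x_le : x <= 1 / 2 by rewrite /x; have := sqr_ge0 (2 * p - 1); rewrite expr2; nra.
have exponent : 2 * (K%:R / q) * (1 - K%:R / q / K%:R) * (1 - 1 / K%:R) = x * (K%:R - 1).
  by rewrite /x /p; field; rewrite !gt_eqF.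
rewrite exponent in hF.
have pow_le : (1 - x) ^+ K.-2 <= expR (- x * K.-2%:R).
  rewrite expRM_natr lerXn2r ?nnegrE ?expR_ge0 //; first by lra.
  by have := expR_ge1Dx (- x); lra.
have tail_le : F * (1 - x) ^+ K.-2 <= q * (1 - p) / K%:R.
  apply: le_trans (ler_pM F_ge0 (exprn_ge0 _ _) hF pow_le) _; first by lra.
  rewrite -[_ * expR _ * expR _]mulrA -expRD.
  have exp_le : x * (K%:R - 1) + - x * K.-2%:R <= x.
    have : K%:R <= (K.-2 + 2)%:R :> R by rewrite ler_nat; lia.
    rewrite natrD; nra.
  have A_ge0 : 0 <= q / (2 * K%:R) * (1 - p) by apply: mulr_ge0; [apply: divr_ge0|]; lra.
  apply: le_trans (ler_wpM2l A_ge0 (_ : expR _ <= 2)) _.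
    by apply: le_trans (expR_le2 x_le); rewrite ler_expR.
  by rewrite le_eqVlt; apply/orP; left; apply/eqP; field; rewrite gt_eqF.
have K1 : K.-1%:R = K%:R - 1 :> R by rewrite -[in RHS](prednK K_gt0) -natr1 addrK.
have K1_ge0 : 0 <= K%:R - 1 :> R by rewrite -K1.
have e_ge0 : 0 <= p * (1 - p) by nra.
have e_le : p * (1 - p) <= 1 / 4 by have := sqr_ge0 (2 * p - 1); rewrite expr2; nra.
rewrite natrM K1 (_ : _ * F * _ = K%:R * (K%:R - 1) * (p * (1 - p)) ^+ 2
                                 * (F * (1 - x) ^+ K.-2)); last by ring.
apply: le_trans (ler_wpM2l _ tail_le) _; first by rewrite !mulr_ge0 ?exprn_ge0 //; lra.
rewrite (_ : _ * (q * (1 - p) / K%:R) = (K%:R - 1) * (p * (1 - p)) * (1 - p) ^+ 2 * (p * q)).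
  rewrite pq mulr1 expr2.
  have h2 : (1 - p) * (1 - p) <= 1 - p by nra.
  apply: le_trans (ler_wpM2l (mulr_ge0 K1_ge0 e_ge0) h2) _.
  have := ler_wpM2l K1_ge0 e_le; nra.
by field; rewrite gt_eqF.
Qed.

Lemma qceil_ge (N : nat) (M : R) : 0 < M -> N%:R / M <= (qceil N M)%:R.
Proof.
move=> M_gt0; have NM_ge0 : 0 <= N%:R / M by rewrite divr_ge0 // ltW.
have ceil_ge0 : 0 <= Num.ceil (N%:R / M) by rewrite -(ler_int R) (le_trans NM_ge0) ?ceil_ge.
by rewrite /qceil natr_absz ger0_norm // ceil_ge.
Qed.

End Estimates.

Theorem theorem4 (R : realType) (N K F' : nat) (M : R)
  (hM0 : 0 < M) (hMN : M <= N%:R) (hNK : (K < N)%N) (hF' : (0 < F')%N)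
  (d : 'I_K -> 'I_N) (hd : injective d) :
  let q := qceil N M in
  let F : R := (q * F')%:R in
  let t : R := K%:R / q%:R in
  F <= q%:R / (2 * K%:R) * (1 - 1 / q%:R)
         * expR (2 * t * (1 - t / K%:R) * (1 - 1 / K%:R)) ->
  1 / 2 * (1 - M / N%:R) * K%:R <= @ERnd R K N F' q d.
Proof.
move=> q F t hF.
have N_gt0 : 0 < N%:R :> R by lra.
have q_ge : N%:R / M <= q%:R by exact: qceil_ge.
have q_ge1 : 1 <= q%:R :> R by apply: le_trans q_ge; rewrite ler_pdivlMr // mul1r.
have q_gt0 : (0 < q)%N by rewrite -(ltr0n R); lra.
have p_le : q%:R^-1 <= M / N%:R.
  by rewrite -[M / _]invf_div lef_pV2 ?posrE ?divr_gt0 //; lra.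
have half_le : 1 / 2 * (1 - M / N%:R) * K%:R <= K%:R * (1 - q%:R^-1) / 2.
  by have K_ge0 : 0 <= K%:R :> R by []; nra.
apply: le_trans (@ERnd_ge R K N F' q d hd q_gt0 hF').
by move: (swap_term_le q_ge1 (ler0n R _) hF) half_le; lra.
Qed.
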